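(* Let $A$ be a commutative ring. Then $A^\times \cup \sqrt{(0)} \subseteq [1]^{A^\circ}_A$; equivalently, the units and nilpotent elements of $A$ are the same as those of its subring $[1]^{A^\circ}_A$. Moreover, the inclusion is an equality if and only if $A$ is unit-additive, if and only if $[1]^{A^\circ}_A$ is unit-additive, if and only if the inclusions $$A^\times \cup \sqrt{(0)} \subseteq A^\times \cup J(A) \subseteq [1]^{A^\times}_A \subseteq [1]^{\mathrm{reg}(A)}_A \subseteq [1]^{A^\circ}_A$$ are equalities.
   Context: For $T\subseteq A$, a $T$-factroid of $A$ is an additive subgroup $F$ of $A$ such that for all $a\in A$, $t\in T$, $ta\in F$ implies $a\in F$; $[1]^T_A$ is the smallest $T$-factroid of $A$ containing $1$ (it is a subring of $A$). $A^\times$ is the unit group, $J(A)$ the Jacobson radical, $\mathrm{reg}(A)$ the set of nonzerodivisors, and $A^\circ$ the complement of the union of the minimal prime ideals of $A$. A commutative ring is unit-additive if for all units $u,v$, $u+v$ is a unit or nilpotent. *)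

From mathcomp Require Import all_boot all_algebra.
Set Implicit Arguments. Unset Strict Implicit. Unset Printing Implicit Defensive.
Import GRing.Theory.
Local Open Scope ring_scope.

Section Defs.
Variable A : comPzRingType.  (* commutative ring, zero ring allowed *)

Definition is_unit (x : A) : Prop := exists y : A, x * y = 1.
Definition is_nilpotent (x : A) : Prop := exists n : nat, x ^+ n = 0.

Definition additive_subgroup (F : A -> Prop) : Prop :=
  F 0 /\ (forall x y, F x -> F y -> F (x - y)).
Definition is_ideal (I : A -> Prop) : Prop :=
  additive_subgroup I /\ (forall a x, I x -> I (a * x)).
Definition is_maximal_ideal (M : A -> Prop) : Prop :=
  is_ideal M /\ ~ M 1 /\
  (forall I, is_ideal I -> ~ I 1 -> (forall x, M x -> I x) -> forall x, I x -> M x).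
Definition is_prime_ideal (P : A -> Prop) : Prop :=
  is_ideal P /\ ~ P 1 /\ (forall a b, P (a * b) -> P a \/ P b).
Definition is_minimal_prime (P : A -> Prop) : Prop :=
  is_prime_ideal P /\
  (forall Q, is_prime_ideal Q -> (forall x, Q x -> P x) -> forall x, P x -> Q x).

Definition jacobson (x : A) : Prop := forall M, is_maximal_ideal M -> M x.
Definition regular (x : A) : Prop := forall y : A, x * y = 0 -> y = 0.
Definition circ (x : A) : Prop := forall P, is_minimal_prime P -> ~ P x.

Definition factroid (T F : A -> Prop) : Prop :=
  additive_subgroup F /\ (forall a t, T t -> F (t * a) -> F a).
Definition one_factroid (T : A -> Prop) (x : A) : Prop :=
  forall F, factroid T F -> F 1 -> F x.

Definition unit_additive : Prop :=
  forall u v, is_unit u -> is_unit v -> is_unit (u + v) \/ is_nilpotent (u + v).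

Definition sub_unit (S : A -> Prop) (x : A) : Prop :=
  S x /\ exists y, S y /\ x * y = 1.
Definition sub_unit_additive (S : A -> Prop) : Prop :=
  forall u v, sub_unit S u -> sub_unit S v ->
    sub_unit S (u + v) \/ is_nilpotent (u + v).
End Defs.

(* Units lie in no prime ideal, and regular elements lie in no minimal prime,
   because every element x of a minimal prime P satisfies s x^k = 0 for some
   s outside P (otherwise a prime avoiding the multiplicative set (A \ P) x^N
   would sit strictly below P).  When T contains the units, a T-factroid F
   containing 1 contains every unit u (u u' = 1 in F gives u' in F, and then
   u' u in F gives u in F) and hence every nilpotent n = 1 - (1 - n); as
   1 + J(A) consists of units, this yields the chain of inclusions.
   If A is unit-additive, the units and nilpotents already form an
   A°-factroid: x - y is a sum of two units, or equals (1 + x) - (1 + y), and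
   t a nilpotent with t in A° forces a nilpotent since the nilradical is the
   intersection of the minimal primes.  So [1]^{A°}_A collapses to
   A^× ∪ √(0); conversely [1]^{A°}_A is closed under addition, so the collapse
   forces unit-additivity. *)

From mathcomp Require Import all_boot all_algebra ring.
From mathcomp Require Import boolp classical_sets.

Set Implicit Arguments.
Unset Strict Implicit.
Unset Printing Implicit Defensive.

Import GRing.Theory.
Local Open Scope ring_scope.
Local Open Scope classical_set_scope.

Lemma Zorn_bigcup_above (T : Type) (P : set (set T)) (X0 : set T) : P X0 ->
    (forall F, F `<=` P -> F !=set0 -> total_on F subset ->
      P (\bigcup_(X in F) X)) ->
  exists M, [/\ P M, X0 `<=` M & forall B, P B -> M `<=` B -> B `<=` M].
Proof.
move=> PX0 Pchain.
(* Zorn_bigcup also needs the empty chain; working with the sets X such that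
   P (X `|` X0) takes care of it. *)
have [M [PMX0 Mmax]] :
    exists M, P (M `|` X0) /\ forall B, M `<` B -> ~ P (B `|` X0).
  apply: (@Zorn_bigcup _ [set X | P (X `|` X0)]) => F FP Ftot /=.
  have [[X FX]|F0] := pselect (F !=set0); last first.
    suff -> : \bigcup_(X in F) X = set0 by rewrite set0U.
    by apply/seteqP; split => // y [X FX]; case: F0; exists X.
  have -> : \bigcup_(X in F) X `|` X0 =
            \bigcup_(Y in [set X `|` X0 | X in F]) Y.
    apply/seteqP; split=> y.
      case=> [[Y FY Yy] | X0y]; first by exists (Y `|` X0); [exists Y | left].
      by exists (X `|` X0); [exists X | right].
    by case=> _ [Y FY <-] [Yy|X0y]; [left; exists Y | right].
  apply: Pchain; first by move=> _ [Y FY <-]; exact: FP.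
    by exists (X `|` X0), X.
  move=> _ _ [Y FY <-] [Z FZ <-].
  by case: (Ftot Y Z FY FZ) => YZ; [left|right]; exact: setSU.
exists (M `|` X0); split; [done | exact: subsetUr | ].
move=> B PB MX0B; have MB : M `<=` B by move=> y My; apply: MX0B; left.
have BX0 : B `|` X0 = B by apply/setUidPl => y X0y; apply: MX0B; right.
have [BM|BnM] := pselect (B `<=` M); first by move=> y /BM; left.
by case: (Mmax B); [split | rewrite BX0].
Qed.

Lemma subset_chain_collapse (T : Type) (P1 P2 P3 P4 P5 : set T) :
    P1 `<=` P2 -> P2 `<=` P3 -> P3 `<=` P4 -> P4 `<=` P5 ->
  (forall x, P5 x -> P1 x) <->
  ((forall x, P1 x <-> P2 x) /\ (forall x, P2 x <-> P3 x) /\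
   (forall x, P3 x <-> P4 x) /\ (forall x, P4 x <-> P5 x)).
Proof.
move=> P12 P23 P34 P45.
split=> [P51 | [P12' [P23' [P34' P45']]] x /P45'/P34'/P23'/P12' //].
split=> [x|]; first by split=> [/P12 | /P23/P34/P45/P51].
split=> [x|]; first by split=> [/P23 | /P34/P45/P51/P12].
split=> x; first by split=> [/P34 | /P45/P51/P12/P23].
by split=> [/P45 | /P51/P12/P23/P34].
Qed.

Section Ring.
Variable A : comPzRingType.
Implicit Types (x y a b n s t u : A) (S T F I J M P Q : set A).

Lemma is_unit1 : is_unit (1 : A).
Proof. by exists 1; rewrite mulr1. Qed.

Lemma is_unitM x y : is_unit x -> is_unit y -> is_unit (x * y).
Proof. by move=> [x' xx'] [y' yy']; exists (x' * y'); rewrite mulrACA xx' yy' mulr1. Qed.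

Lemma is_unitN x : is_unit x -> is_unit (- x).
Proof. by move=> [x' xx']; exists (- x'); rewrite mulrNN. Qed.

Lemma is_nilpotentMl a n : is_nilpotent n -> is_nilpotent (a * n).
Proof. by move=> [k nk]; exists k; rewrite exprMn nk mulr0. Qed.

Lemma is_nilpotentN n : is_nilpotent n -> is_nilpotent (- n).
Proof. by rewrite -mulN1r; apply: is_nilpotentMl. Qed.

Lemma is_unit1B n : is_nilpotent n -> is_unit (1 - n).
Proof.
move=> [k nk]; exists (\sum_(i < k) n ^+ i).
by apply: oppr_inj; rewrite -mulNr opprB -subrX1 nk sub0r.
Qed.

Lemma is_unitD_nilpotent u n : is_unit u -> is_nilpotent n -> is_unit (u + n).
Proof.
move=> [u' uu'] nn; have -> : u + n = u * (1 - (- (u' * n))).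
  by rewrite opprK mulrDr mulr1 mulrA uu' mul1r.
by apply: is_unitM; [exists u' | apply/is_unit1B/is_nilpotentN/is_nilpotentMl].
Qed.

Lemma unit_regular u : is_unit u -> regular u.
Proof. by move=> [u' uu'] y uy0; rewrite -[y]mul1r -uu' mulrAC uy0 mul0r. Qed.

Lemma regularX t k : regular t -> regular (t ^+ k).
Proof.
move=> rt; elim: k => [|k IHk] y; first by rewrite expr0 mul1r.
by rewrite exprS -mulrA => /rt /IHk.
Qed.

Section Factroid.
Variable T : set A.

Lemma factroid0 F : factroid T F -> F 0.
Proof. by case=> [[]]. Qed.

Lemma factroidB F x y : factroid T F -> F x -> F y -> F (x - y).
Proof. by case=> [[_ FB]] _; apply: FB. Qed.

Lemma factroidN F x : factroid T F -> F x -> F (- x).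
Proof. by move=> FT Fx; rewrite -sub0r; apply: factroidB (factroid0 FT) Fx. Qed.

Lemma factroidD F x y : factroid T F -> F x -> F y -> F (x + y).
Proof. by move=> FT Fx /(factroidN FT) Fy; rewrite -[y]opprK; apply: factroidB. Qed.

Hypothesis unitT : forall u, is_unit u -> T u.

Lemma factroid_unit F u : factroid T F -> F 1 -> is_unit u -> F u.
Proof.
move=> [_ Fdiv] F1 [u' uu'].
have Fu' : F u' by apply: (Fdiv _ u); [apply: unitT; exists u' | rewrite uu'].
by apply: (Fdiv _ u'); [apply: unitT; exists u; rewrite mulrC | rewrite mulrC uu'].
Qed.

Lemma factroid_nilpotent F n : factroid T F -> F 1 -> is_nilpotent n -> F n.
Proof.
move=> FT F1 /is_unit1B /(factroid_unit FT F1) F1n.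
by rewrite -[n](subKr 1); apply: factroidB.
Qed.

Lemma one_factroid1 : one_factroid T 1.
Proof. by []. Qed.

Lemma one_factroid_factroid : factroid T (one_factroid T).
Proof.
split; first split.
- by move=> F FT _; apply: factroid0 FT.
- by move=> x y Cx Cy F FT F1; apply: factroidB FT (Cx F FT F1) (Cy F FT F1).
- by move=> a t Tt Cta F FT F1; apply: FT.2 Tt (Cta F FT F1).
Qed.

Lemma one_factroid_unit u : is_unit u -> one_factroid T u.
Proof. exact: factroid_unit one_factroid_factroid one_factroid1. Qed.

Lemma one_factroid_nilpotent n : is_nilpotent n -> one_factroid T n.
Proof. exact: factroid_nilpotent one_factroid_factroid one_factroid1. Qed.

End Factroid.

Lemma one_factroidS T T' : T `<=` T' -> one_factroid T `<=` one_factroid T'.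
Proof. by move=> TT' x Cx F [FG Fdiv]; apply: Cx; split => // a t /TT'; apply: Fdiv. Qed.

Lemma sub_unitE S x : (forall u, is_unit u -> S u) -> is_unit x <-> sub_unit S x.
Proof.
move=> unitS; split=> [[x' xx'] | [_ [x' [_ xx']]]]; last by exists x'.
split; first by apply: unitS; exists x'.
by exists x'; split=> //; apply: unitS; exists x; rewrite mulrC.
Qed.

Lemma sub_unit_additiveE S :
  (forall u, is_unit u -> S u) -> sub_unit_additive S <-> unit_additive A.
Proof.
move=> unitS; split=> UA u v.
  by rewrite !(sub_unitE _ unitS); apply: UA.
by rewrite -!(sub_unitE _ unitS); apply: UA.
Qed.

Lemma ideal0 I : is_ideal I -> I 0.
Proof. by case=> [[]]. Qed.

Lemma idealB I x y : is_ideal I -> I x -> I y -> I (x - y).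
Proof. by case=> [[_ IB]] _; apply: IB. Qed.

Lemma idealMl I a x : is_ideal I -> I x -> I (a * x).
Proof. by case=> _; apply. Qed.

Lemma idealMr I a x : is_ideal I -> I x -> I (x * a).
Proof. by rewrite mulrC; apply: idealMl. Qed.

Lemma idealD I x y : is_ideal I -> I x -> I y -> I (x + y).
Proof.
move=> II Ix Iy; have -> : x + y = x - (0 - y) by rewrite sub0r opprK.
exact: idealB II Ix (idealB II (ideal0 II) Iy).
Qed.

Lemma ideal_unit I u : is_ideal I -> is_unit u -> I u -> I 1.
Proof. by move=> II [u' uu'] Iu; rewrite -uu'; apply: idealMr. Qed.

Lemma prime_ideal1 P : is_prime_ideal P -> ~ P 1.
Proof. by case=> _ []. Qed.

Lemma prime_idealM P a b : is_prime_ideal P -> P (a * b) -> P a \/ P b.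
Proof. by case=> _ [_]; apply. Qed.

Lemma prime_idealX P x k : is_prime_ideal P -> P (x ^+ k) -> P x.
Proof.
move=> PP; elim: k => [|k IHk]; first by rewrite expr0 => /(prime_ideal1 PP).
by rewrite exprS => /(prime_idealM PP) [|/IHk].
Qed.

Lemma prime_ideal_unit P u : is_prime_ideal P -> is_unit u -> ~ P u.
Proof. by move=> PP /(ideal_unit PP.1) Pu /Pu /(prime_ideal1 PP). Qed.

Lemma is_ideal_bigcup (G : set (set A)) : G !=set0 -> total_on G subset ->
  (forall I, G I -> is_ideal I) -> is_ideal (\bigcup_(I in G) I).
Proof.
move=> [I0 GI0] Gtot idealG; split; first split.
- by exists I0 => //; apply: ideal0 (idealG I0 GI0).
- move=> x y [I GI Ix] [J GJ Jy].
  have [IJ|JI] := Gtot I J GI GJ.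
    by exists J => //; apply: idealB (idealG J GJ) (IJ x Ix) Jy.
  by exists I => //; apply: idealB (idealG I GI) Ix (JI y Jy).
- by move=> a x [I GI Ix]; exists I => //; apply: idealMl (idealG I GI) Ix.
Qed.

Lemma is_prime_ideal_bigcap (J : Type) (D : set J) (Q : J -> set A) :
  D !=set0 -> total_on D (fun i j => Q i `<=` Q j) ->
  (forall i, D i -> is_prime_ideal (Q i)) -> is_prime_ideal (\bigcap_(i in D) Q i).
Proof.
move=> [i0 Di0] Dtot DQ; split; [split; first split | split].
- by move=> i /DQ [/ideal0].
- by move=> x y Qx Qy i Di; apply: idealB (DQ i Di).1 (Qx i Di) (Qy i Di).
- by move=> a x Qx i Di; apply: idealMl (DQ i Di).1 (Qx i Di).
- by move=> Q1; apply: prime_ideal1 (DQ i0 Di0) (Q1 i0 Di0).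
move=> a b Qab; apply/not_notP => /not_orP[/existsPNP[i Di Qia] /existsPNP[j Dj Qjb]].
have [Qij|Qji] := Dtot i j Di Dj.
  by case: (prime_idealM (DQ i Di) (Qab i Di)) => // /Qij.
by case: (prime_idealM (DQ j Dj) (Qab j Dj)) => // /Qji.
Qed.

Lemma is_ideal0 : is_ideal [set 0 : A].
Proof.
split; first split => //; first by move=> _ _ -> ->; rewrite subr0.
by move=> a _ ->; rewrite mulr0.
Qed.

Definition adjoin_ideal I a : set A := [set m + r * a | m in I & r in [set: A]].

Lemma is_ideal_adjoin I a : is_ideal I -> is_ideal (adjoin_ideal I a).
Proof.
move=> II; split; first split.
- by exists 0; [apply: ideal0 | exists 0 => //; rewrite mul0r addr0].
- move=> _ _ [m Im [r _ <-]] [m' Im' [r' _ <-]].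
  by exists (m - m'); [apply: idealB | exists (r - r') => //; ring].
- move=> c _ [m Im [r _ <-]].
  by exists (c * m); [apply: idealMl | exists (c * r) => //; ring].
Qed.

Lemma adjoin_ideal_mem I a : is_ideal I -> adjoin_ideal I a a.
Proof. by move=> II; exists 0; [apply: ideal0 | exists 1 => //; rewrite mul1r add0r]. Qed.

Definition ideal_maximal_disjoint S M :=
  [/\ is_ideal M, M `<=` ~` S &
      forall J, is_ideal J -> J `<=` ~` S -> M `<=` J -> J `<=` M].

Lemma ex_ideal_maximal_disjoint S I0 : is_ideal I0 -> I0 `<=` ~` S ->
  exists2 M, ideal_maximal_disjoint S M & I0 `<=` M.
Proof.
move=> II0 I0S.
have [|M [[IM MS] I0M Mmax]] :=
  Zorn_bigcup_above (P := [set I | is_ideal I /\ I `<=` ~` S]) (conj II0 I0S).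
  move=> G GP G0 Gtot; split; last by apply: bigcup_sub => I /GP[].
  by apply: is_ideal_bigcup => // I /GP[].
by exists M => //; split=> // J IJ JS; apply: Mmax.
Qed.

Lemma ideal_maximal_disjoint_adjoin S M c :
  ideal_maximal_disjoint S M -> ~ M c -> exists2 s, S s & adjoin_ideal M c s.
Proof.
move=> [IM MS Mmax] Mc; apply/not_notP => noS; apply: Mc.
apply: (Mmax _ (is_ideal_adjoin c IM)); last exact: adjoin_ideal_mem.
  by move=> s Ms Ss; apply: noS; exists s.
by move=> m Mm; exists m => //; exists 0 => //; rewrite mul0r addr0.
Qed.

Lemma ideal_maximal_disjoint_prime S M :
    S 1 -> (forall x y, S x -> S y -> S (x * y)) ->
  ideal_maximal_disjoint S M -> is_prime_ideal M.
Proof.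
move=> S1 SM MS'; have [IM MS _] := MS'.
split=> //; split=> [M1 | a b Mab]; first exact: MS M1 S1.
apply/not_notP => /not_orP[Ma Mb].
have [s1 Ss1 [m1 Mm1 [r1 _ E1]]] := ideal_maximal_disjoint_adjoin MS' Ma.
have [s2 Ss2 [m2 Mm2 [r2 _ E2]]] := ideal_maximal_disjoint_adjoin MS' Mb.
apply: MS (SM _ _ Ss1 Ss2); rewrite -E1 -E2.
have -> : (m1 + r1 * a) * (m2 + r2 * b) =
          m1 * (m2 + r2 * b) + r1 * (m2 * a) + r1 * r2 * (a * b) by ring.
have Mr1m2a := idealMl r1 IM (idealMr a IM Mm2).
exact: idealD IM (idealD IM (idealMr _ IM Mm1) Mr1m2a) (idealMl _ IM Mab).
Qed.

Lemma ex_prime_ideal_disjoint S :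
    S 1 -> (forall x y, S x -> S y -> S (x * y)) -> ~ S 0 ->
  exists2 P, is_prime_ideal P & P `<=` ~` S.
Proof.
move=> S1 SM S0.
have [|M MS' _] := ex_ideal_maximal_disjoint (S := S) is_ideal0; first by move=> _ -> /S0.
by exists M; [apply: ideal_maximal_disjoint_prime MS' | case: MS'].
Qed.

Lemma maximal_idealE M : is_maximal_ideal M <-> ideal_maximal_disjoint [set 1] M.
Proof.
split=> [[IM [M1 Mmax]] | [IM M1 Mmax]].
  split=> // [x Mx x1 | J IJ J1 MJ]; first by apply: M1; rewrite -x1.
  by apply: Mmax => // /J1; apply.
split=> //; split=> [/M1|]; first exact.
by move=> J IJ J1 MJ; apply: Mmax => // x Jx x1; apply: J1; rewrite -x1.
Qed.

Lemma ex_maximal_ideal_above x : ~ is_unit x -> exists2 M, is_maximal_ideal M & M x.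
Proof.
move=> nux; have Ix := is_ideal_adjoin x is_ideal0.
have [|M MS' xM] := ex_ideal_maximal_disjoint (S := [set 1]) Ix.
  by move=> _ [_ -> [r _ <-]] rx1; apply: nux; exists r; rewrite mulrC -rx1 add0r.
by exists M; [apply/maximal_idealE | apply/xM/adjoin_ideal_mem/is_ideal0].
Qed.

Lemma ex_minimal_prime_below P : is_prime_ideal P ->
  exists2 Q, is_minimal_prime Q & Q `<=` P.
Proof.
(* Zorn on complements: a maximal complement of a prime is a minimal prime. *)
move=> PP; have PCC : [set X | is_prime_ideal (~` X)] (~` P) by rewrite /= setCK.
have [|M [PM PM0 Mmax]] := Zorn_bigcup_above PCC.
  move=> G GP G0 Gtot; rewrite /= setC_bigcup; apply: is_prime_ideal_bigcap G0 _ GP.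
  by move=> X Y GX GY; case: (Gtot X Y GX GY) => XY; [right | left]; apply: subsetC.
exists (~` M); last exact: subsetCl.
split=> // Q PQ QM; apply: subsetCl; apply: Mmax; last exact: subsetCr.
by rewrite /= setCK.
Qed.

Lemma not_nilpotent_minimal_prime a : ~ is_nilpotent a ->
  exists2 Q, is_minimal_prime Q & ~ Q a.
Proof.
move=> Na; have [|||P PP PS] := ex_prime_ideal_disjoint (S := range (GRing.exp a)).
- by exists 0%N => //; rewrite expr0.
- by move=> _ _ [k _ <-] [l _ <-]; exists (k + l)%N => //; rewrite exprD.
- by case=> k _ ak0; apply: Na; exists k.
have [Q QM QP] := ex_minimal_prime_below PP.
by exists Q => // /QP /PS; apply; exists 1%N => //; rewrite expr1.
Qed.

Lemma minimal_prime_zero_divisor P x : is_minimal_prime P -> P x ->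
  exists2 s, ~ P s & exists k, s * x ^+ k = 0.
Proof.
move=> [PP Pmin] Px; apply/not_notP => /forallPNP noZ.
have [|||Q PQ QS] :=
  ex_prime_ideal_disjoint (S := [set s * x ^+ k | s in ~` P & k in [set: nat]]).
- by exists 1; [apply: prime_ideal1 PP | exists 0%N => //; rewrite expr0 mulr1].
- move=> _ _ [s Ps [k _ <-]] [s' Ps' [k' _ <-]].
  exists (s * s'); first by case/(prime_idealM PP).
  by exists (k + k')%N => //; rewrite exprD mulrACA.
- by case=> s Ps [k _ sx0]; apply: noZ Ps _; exists k.
have QP : Q `<=` P.
  move=> y Qy; apply/not_notP => Py; apply: QS Qy _.
  by exists y => //; exists 0%N => //; rewrite expr0 mulr1.
apply: QS (Pmin Q PQ QP x Px) _.
by exists 1; [apply: prime_ideal1 PP | exists 1%N => //; rewrite expr1 mul1r].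
Qed.

Lemma unit_circ u : is_unit u -> circ u.
Proof. by move=> uu P [PP _]; apply: prime_ideal_unit PP uu. Qed.

Lemma regular_circ t : regular t -> circ t.
Proof.
move=> rt P PM Pt; have [s Ps [k stk]] := minimal_prime_zero_divisor PM Pt.
have s0 : s = 0 by apply: (regularX (k := k) rt); rewrite mulrC.
by apply: Ps; rewrite s0; apply: ideal0 PM.1.1.
Qed.

Lemma circ_mul_nilpotent t a : circ t -> is_nilpotent (t * a) -> is_nilpotent a.
Proof.
move=> ct [k tak]; apply/not_notP => /not_nilpotent_minimal_prime[Q QM Qa].
have : Q (t * a) by apply: (prime_idealX (k := k) QM.1); rewrite tak; apply: ideal0 QM.1.1.
by case/(prime_idealM QM.1) => // /(ct Q QM).
Qed.

Lemma nilpotent_jacobson n : is_nilpotent n -> jacobson n.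
Proof.
move=> nn M /maximal_idealE MS'; apply/not_notP => Mn.
have [s s1 [m Mm [r _ mrn]]] := ideal_maximal_disjoint_adjoin MS' Mn.
have um : is_unit m.
  by rewrite -[m](addrK (r * n)) mrn s1; apply/is_unit1B/is_nilpotentMl.
by case: MS' => IM M1 _; apply: (M1 1 (ideal_unit IM um Mm)).
Qed.

Lemma jacobson_unit1D x : jacobson x -> is_unit (1 + x).
Proof.
move=> Jx; apply/not_notP => /ex_maximal_ideal_above[M MM M1x].
by apply: MM.2.1; rewrite -(addrK x 1); apply: idealB MM.1 M1x (Jx M MM).
Qed.

Lemma unit_or_nilpotent_factroid :
  unit_additive A -> factroid (@circ A) (fun x => is_unit x \/ is_nilpotent x).
Proof.
move=> UA; split; first split.
- by right; exists 1%N; rewrite expr1.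
- move=> x y [ux|nx] [uy|ny].
  + by apply: UA ux (is_unitN uy).
  + by left; apply: is_unitD_nilpotent ux (is_nilpotentN ny).
  + by left; rewrite addrC; apply: is_unitD_nilpotent (is_unitN uy) nx.
  + have -> : x - y = (1 + x) + - (1 + y) by ring.
    by apply: UA; [|apply: is_unitN]; apply: is_unitD_nilpotent is_unit1 _.
- move=> a t ct [[w taw]|nta]; last by right; apply: circ_mul_nilpotent ct nta.
  by left; exists (t * w); rewrite mulrCA mulrA taw.
Qed.

Lemma unit_additiveE : unit_additive A <->
  (forall x, one_factroid (@circ A) x -> is_unit x \/ is_nilpotent x).
Proof.
split=> [UA x Cx | CUN u v uu uv].
  by apply: Cx (unit_or_nilpotent_factroid UA) _; left; apply: is_unit1.
apply: CUN; have CU := one_factroid_unit unit_circ.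
exact: factroidD (one_factroid_factroid _) (CU _ uu) (CU _ uv).
Qed.

Lemma one_factroid_unit_jacobson x :
  is_unit x \/ jacobson x -> one_factroid (@is_unit A) x.
Proof.
have CU := @one_factroid_unit (@is_unit A) (fun _ uu => uu).
case=> [/CU // | /jacobson_unit1D /CU C1x].
have -> : x = (1 + x) - 1 by rewrite addrC addKr.
exact: factroidB (one_factroid_factroid _) C1x (CU _ is_unit1).
Qed.

End Ring.

Theorem proposition9p5 (A : comPzRingType) :
  let C := one_factroid (@circ A) in
  (* A^x ∪ sqrt(0) ⊆ [1]^{A°}_A *)
  (forall x : A, is_unit x \/ is_nilpotent x -> C x) /\
  (* equivalently: units and nilpotents of A coincide with those of C *)
  (forall x : A, is_unit x <-> sub_unit C x) /\
  (forall x : A, is_nilpotent x <-> (C x /\ is_nilpotent x)) /\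
  (* equality of the inclusion iff A unit-additive iff C unit-additive iff chain equalities *)
  (((forall x : A, C x -> is_unit x \/ is_nilpotent x) <-> unit_additive A) /\
   (unit_additive A <-> sub_unit_additive C) /\
   (sub_unit_additive C <->
     ((forall x : A, (is_unit x \/ is_nilpotent x) <-> (is_unit x \/ jacobson x)) /\
      (forall x : A, (is_unit x \/ jacobson x) <-> one_factroid (@is_unit A) x) /\
      (forall x : A, one_factroid (@is_unit A) x <-> one_factroid (@regular A) x) /\
      (forall x : A, one_factroid (@regular A) x <-> C x)))).
Proof.
move=> C.
have CU := one_factroid_unit (@unit_circ A).
have UNC x : is_unit x \/ is_nilpotent x -> C x.
  by case=> [/CU | /(one_factroid_nilpotent (@unit_circ A))].
split; first exact: UNC.
split; first by move=> x; apply: sub_unitE.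
split; first by move=> x; split=> [nx | []] //; split=> //; apply: UNC; right.
split; first exact: iff_sym (@unit_additiveE A).
split; first exact: iff_sym (sub_unit_additiveE CU).
rewrite (sub_unit_additiveE CU) unit_additiveE.
apply: subset_chain_collapse => x.
- by case=> [ux | /nilpotent_jacobson]; [left | right].
- exact: one_factroid_unit_jacobson.
- exact: one_factroidS (@unit_regular A) x.
- exact: one_factroidS (@regular_circ A) x.
Qed.
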